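(* Let $G=(V=V_0\uplus V_1, v_{\mathsf{init}}, E,\gamma)$ be a quantitative graph game and let $d=\frac{p}{q}>1$ be the discount factor, with $p,q$ positive integers. Then the optimal cost $W$ of the game is a rational number with denominator at most $(p^{|V|}-q^{|V|})\cdot p^{|V|}$.
   Context: A quantitative graph game $G=(V=V_0\uplus V_1, v_{\mathsf{init}},E,\gamma)$ consists of a finite directed graph $(V,E)$ in which every state has at least one outgoing edge, a partition of $V$ into $V_0$ (states of the maximizing player $P_0$) and $V_1$ (states of the minimizing player $P_1$), an initial state $v_{\mathsf{init}}$, and an integer cost function $\gamma:E\to\mathbb{Z}$. A play is an infinite path $v_0v_1\dots$ with $v_0=v_{\mathsf{init}}$, where the player owning the current state chooses the successor; its cost with discount factor $d>1$ is $\sum_{k\ge0}\gamma(v_k,v_{k+1})/d^{k}$. Define $\mathit{wt}_1(v)=\max\{\gamma(v,w):(v,w)\in E\}$ if $v\in V_0$ and $\min\{\gamma(v,w):(v,w)\in E\}$ if $v\in V_1$, and $\mathit{wt}_{k+1}(v)=\max\{\gamma(v,w)+\frac1d\mathit{wt}_k(w):(v,w)\in E\}$ if $v\in V_0$, with $\min$ instead of $\max$ if $v\in V_1$. The optimal cost is $W=\lim_{k\to\infty}\mathit{wt}_k(v_{\mathsf{init}})$. *)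

From HB Require Import structures.
From mathcomp Require Import all_boot all_order all_algebra.
From mathcomp Require Import all_classical all_reals all_analysis.
Set Implicit Arguments. Unset Strict Implicit. Unset Printing Implicit Defensive.
Import Order.TTheory GRing.Theory Num.Theory.
Local Open Scope ring_scope.

(* A quantitative graph game on a finite state type V:
   - [owner0 v] holds iff v belongs to V_0 (maximizing player P_0),
     otherwise v belongs to V_1 (minimizing player P_1);
   - [E] is the edge relation; [gamma v w] is the (integer) cost of edge (v,w)
     (its values on non-edges are irrelevant). *)

Definition succs (V : finType) (E : rel V) (v : V) : seq V :=
  [seq w <- enum V | E v w].

(* maximum / minimum of f over the successors of v (the seed is itself a
   successor whenever v has one, so this is the genuine max / min) *)
Definition max_succ (R : realDomainType) (V : finType) (E : rel V) (v : V)
  (f : V -> R) : R :=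
  \big[Num.max/f (head v (succs E v))]_(w <- succs E v) f w.

Definition min_succ (R : realDomainType) (V : finType) (E : rel V) (v : V)
  (f : V -> R) : R :=
  \big[Num.min/f (head v (succs E v))]_(w <- succs E v) f w.

(* [wt k v] is the paper's wt_{k+1}(v), with discount factor d. *)
Fixpoint wt (R : realFieldType) (V : finType) (owner0 : pred V) (E : rel V)
  (gamma : V -> V -> int) (d : R) (k : nat) (v : V) : R :=
  match k with
  | 0 => if owner0 v then max_succ E v (fun w => (gamma v w)%:~R)
         else min_succ E v (fun w => (gamma v w)%:~R)
  | k'.+1 =>
      let f := fun w => (gamma v w)%:~R + d^-1 * wt owner0 E gamma d k' w in
      if owner0 v then max_succ E v f else min_succ E v f
  end.

From HB Require Import structures.
From mathcomp Require Import all_boot all_order all_algebra.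
From mathcomp Require Import all_classical all_reals all_analysis.
From mathcomp Require Import ring lra zify.
Import Order.TTheory GRing.Theory Num.Theory.
Import numFieldNormedType.Exports.
Local Open Scope classical_set_scope.
Local Open Scope ring_scope.

Set Implicit Arguments.
Unset Strict Implicit.
Unset Printing Implicit Defensive.

(* Value iteration iterates the Bellman operator, a d^-1-contraction for the
   sup norm, so by Banach's fixed point theorem wt_k converges to a fixed
   point x.  Choosing at each state a successor that realises the max/min in
   x = bellman x gives a positional strategy s with
   p x v - q x (s v) = p gamma(v, s v); hence p^k x v - q^k x (s^k v) is an
   integer for every k.  By pigeonhole s^|V| v_init = s^m v_init for some
   m < |V|; with l = |V| - m and y = s^m v_init we get s^l y = y, so
   (p^l - q^l) x y is an integer, and then so is p^m (p^l - q^l) x v_init. *)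

Lemma big_seq_choice_attained (I : eqType) (T : Type) (op : T -> T -> T)
    (s : seq I) (F : I -> T) (a : I) :
  (forall x y, op x y = x \/ op x y = y) -> a \in s ->
  exists2 i, i \in s & \big[op/F a]_(i <- s) F i = F i.
Proof.
move=> op_choice a_s; rewrite big_seq.
apply: (big_ind (fun y => exists2 i, i \in s & y = F i)).
- by exists a.
- by move=> _ _ [i s_i ->] [j s_j ->]; case: (op_choice (F i) (F j)) => ->;
    [exists i | exists j].
- by move=> i s_i; exists i.
Qed.

Lemma max_choice (R : realDomainType) (x y : R) :
  Num.max x y = x \/ Num.max x y = y.
Proof. by case: (leP x y) => [/max_idPr|/ltW/max_idPl]; [right | left]. Qed.

Section Successors.
Variables (R : realDomainType) (V : finType) (E : rel V) (v : V).
Hypothesis has_succ : exists w, E v w.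
Implicit Types (f g : V -> R).

Lemma mem_succs w : (w \in succs E v) = E v w.
Proof. by rewrite mem_filter mem_enum andbT. Qed.

Lemma max_succ_ge f w : E v w -> f w <= max_succ E v f.
Proof. by rewrite -mem_succs => s_w; exact: le_bigmax_seq. Qed.

Lemma max_succ_attained f : exists2 w, E v w & max_succ E v f = f w.
Proof.
have [w0 E_w0] := has_succ.
have : head v (succs E v) \in succs E v.
  rewrite -mem_succs in E_w0.
  by case: (succs E v) E_w0 => // a s _; exact: mem_head.
rewrite /max_succ => /(big_seq_choice_attained f (@max_choice R))[w s_w ->].
by exists w; rewrite -?mem_succs.
Qed.

Lemma min_succE f : min_succ E v f = - max_succ E v (fun w => - f w).
Proof.
rewrite /max_succ (big_morph -%R (@oppr_max R) erefl) opprK.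
by apply: eq_bigr => w _; rewrite opprK.
Qed.

Lemma min_succ_attained f : exists2 w, E v w & min_succ E v f = f w.
Proof.
have [w E_w max_w] := max_succ_attained (fun w => - f w).
by exists w; rewrite // min_succE max_w opprK.
Qed.

Lemma max_succ_dist f g e : (forall w, `|f w - g w| <= e) ->
  `|max_succ E v f - max_succ E v g| <= e.
Proof.
move=> f_g; have [w1 E_w1 max_f] := max_succ_attained f.
have [w2 E_w2 max_g] := max_succ_attained g.
have := max_succ_ge f E_w2; have := max_succ_ge g E_w1.
rewrite max_f max_g; move: (f_g w1) (f_g w2); rewrite !ler_norml.
by move=> /andP[? ?] /andP[? ?] ? ?; apply/andP; split; lra.
Qed.

Lemma min_succ_dist f g e : (forall w, `|f w - g w| <= e) ->
  `|min_succ E v f - min_succ E v g| <= e.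
Proof.
move=> f_g; rewrite !min_succE -opprD normrN.
by apply: max_succ_dist => w; rewrite -opprD normrN.
Qed.

End Successors.

Section Bellman.
Variables (R : realFieldType) (V : finType) (owner0 : pred V) (E : rel V)
  (gamma : V -> V -> int) (d : R).
Hypothesis has_succ : forall v, exists w, E v w.
Implicit Types (f g : V -> R).

Definition bellman f v : R :=
  let g w := (gamma v w)%:~R + d^-1 * f w in
  if owner0 v then max_succ E v g else min_succ E v g.

Lemma wt0E : wt owner0 E gamma d 0 = bellman (fun=> 0).
Proof.
apply/funext => v; rewrite /bellman /=.
by case: (owner0 v); congr (_ _ _ _); apply/funext => w; rewrite mulr0 addr0.
Qed.

Lemma wtSE k : wt owner0 E gamma d k.+1 = bellman (wt owner0 E gamma d k).
Proof. by []. Qed.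

Lemma bellman_attained f v :
  exists2 w, E v w & bellman f v = (gamma v w)%:~R + d^-1 * f w.
Proof.
rewrite /bellman; case: (owner0 v).
  exact: max_succ_attained.
exact: min_succ_attained.
Qed.

Lemma bellman_dist f g e v : 0 <= d^-1 -> (forall w, `|f w - g w| <= e) ->
  `|bellman f v - bellman g v| <= d^-1 * e.
Proof.
move=> d_ge0 f_g.
have move_dist w :
    `|((gamma v w)%:~R + d^-1 * f w) - ((gamma v w)%:~R + d^-1 * g w)|
    <= d^-1 * e.
  rewrite (addrC (gamma v w)%:~R) addrKA -mulrBr normrM ger0_norm //.
  exact: ler_wpM2l.
rewrite /bellman; case: (owner0 v).
  exact: max_succ_dist.
exact: min_succ_dist.
Qed.

End Bellman.

(* Functions on V are encoded as row vectors indexed through [enum_rank];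
   the matrix norm is then the sup norm. *)
Section RowsOfFunctions.
Variables (R : realDomainType) (V : finType).

Definition row_of_fun (f : V -> R) : 'rV[R]_#|V| := \row_i f (enum_val i).

Definition fun_of_row (x : 'rV[R]_#|V|) (v : V) : R := x ord0 (enum_rank v).

Lemma row_of_funK : cancel row_of_fun fun_of_row.
Proof. by move=> f; apply/funext => v; rewrite /fun_of_row mxE enum_rankK. Qed.

Lemma fun_of_row0 : fun_of_row 0 = fun=> 0.
Proof. by apply/funext => v; rewrite /fun_of_row mxE. Qed.

Lemma fun_of_rowB x y v :
  fun_of_row (x - y) v = fun_of_row x v - fun_of_row y v.
Proof. by rewrite /fun_of_row !mxE. Qed.

Lemma row_of_funB f g :
  row_of_fun f - row_of_fun g = row_of_fun (fun v => f v - g v).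
Proof. by apply/rowP => i; rewrite !mxE. Qed.

Lemma norm_fun_of_row x v : `|fun_of_row x v| <= `|x|.
Proof.
rewrite -[`|x|]/(mx_norm x) mx_normrE.
exact: (le_bigmax _ (fun ij => `|x ij.1 ij.2|) (ord0, enum_rank v)).
Qed.

Lemma norm_row_of_fun_le f e :
  0 <= e -> (forall v, `|f v| <= e) -> `|row_of_fun f| <= e.
Proof.
move=> e_ge0 f_le; rewrite -[`|_|]/(mx_norm _) mx_normrE.
by apply: bigmax_le => // -[i j] _; rewrite mxE.
Qed.

End RowsOfFunctions.

(* Joins the completeness of matrices with their normed-module structure, so
   that Banach's fixed point theorem applies to row vectors. *)
HB.instance Definition _ (R : realType) (m n : nat) := Complete.on 'M[R]_(m, n).

Section ValueIteration.
Variables (R : realType) (V : finType) (owner0 : pred V) (E : rel V)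
  (gamma : V -> V -> int) (d : R).
Hypothesis has_succ : forall v, exists w, E v w.
Hypothesis dV_ge0 : 0 <= d^-1.
Hypothesis dV_lt1 : d^-1 < 1.

Local Notation bellman := (bellman owner0 E gamma d).

Definition bellman_row (x : 'rV[R]_#|V|) : 'rV[R]_#|V| :=
  row_of_fun (bellman (fun_of_row x)).

Lemma fun_of_bellman_row x :
  fun_of_row (bellman_row x) = bellman (fun_of_row x).
Proof. exact: row_of_funK. Qed.

Lemma bellman_row_contraction :
  contraction (NngNum dV_ge0) (totalfun bellman_row).
Proof.
split=> // -[x y] _ /=; rewrite /bellman_row row_of_funB.
apply: norm_row_of_fun_le => [|v]; first by rewrite mulr_ge0.
by apply: bellman_dist => // w; rewrite -fun_of_rowB norm_fun_of_row.
Qed.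

Lemma wt_iter k : wt owner0 E gamma d k = fun_of_row (iter k.+1 bellman_row 0).
Proof.
elim: k => [|k IH]; first by rewrite wt0E /= fun_of_bellman_row fun_of_row0.
by rewrite wtSE IH [in RHS]iterS fun_of_bellman_row.
Qed.

Lemma wt_cvg_fixpoint :
  exists2 x, bellman x = x &
    forall v, wt owner0 E gamma d k v @[k --> \oo] --> x v.
Proof.
pose y n := iter n bellman_row 0.
have y_cvg : cvgn y := contraction_cvg bellman_row_contraction (I : setT 0).
have y_fix :=
  contraction_cvg_fixed bellman_row_contraction (I : setT 0) closedT.
exists (fun_of_row (limn y)); first by rewrite {2}y_fix /= fun_of_bellman_row.
move=> v; have -> : (fun k => wt owner0 E gamma d k v) =
    (fun k => fun_of_row (y k.+1) v).
  by apply/funext => k; rewrite wt_iter.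
have y_shift_cvg : y k.+1 @[k --> \oo] --> limn y by rewrite cvg_shiftS.
exact: cvg_comp y_shift_cvg (@coord_continuous _ _ _ ord0 (enum_rank v) _).
Qed.

End ValueIteration.

Section OptimalStrategy.
Variables (R : archiRealFieldType) (V : finType) (owner0 : pred V) (E : rel V)
  (gamma : V -> V -> int) (p q : nat).
Hypothesis has_succ : forall v, exists w, E v w.
Hypothesis p_gt0 : (0 < p)%N.
Local Notation d := (p%:R / q%:R : R).
Variable x : V -> R.
Hypothesis x_fix : bellman owner0 E gamma d x = x.

Definition opt_succ (v : V) : V :=
  odflt v [pick w | x v == (gamma v w)%:~R + d^-1 * x w].

Lemma opt_succP v : x v = (gamma v (opt_succ v))%:~R + d^-1 * x (opt_succ v).
Proof.
rewrite /opt_succ; case: pickP => [w /eqP //|no_opt].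
have [w _ opt_w] := bellman_attained owner0 gamma d has_succ x v.
by move: (no_opt w); rewrite -{1}x_fix opt_w eqxx.
Qed.

Lemma opt_succ_int v : p%:R * x v - q%:R * x (opt_succ v) \is a Num.int.
Proof.
have p_neq0 : p%:R != 0 :> R by rewrite pnatr_eq0 -lt0n.
rewrite {1}opt_succP invf_div mulrDr mulrA mulrCA divff // mulr1 addrK.
by rewrite rpredM ?natr_int ?intr_int.
Qed.

Lemma iter_opt_succ_int k v :
  p%:R ^+ k * x v - q%:R ^+ k * x (iter k opt_succ v) \is a Num.int.
Proof.
elim: k => [|k IH]; first by rewrite !expr0 !mul1r subrr.
set y := iter k opt_succ v.
have -> : p%:R ^+ k.+1 * x v - q%:R ^+ k.+1 * x (iter k.+1 opt_succ v) =
    p%:R * (p%:R ^+ k * x v - q%:R ^+ k * x y)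
    + q%:R ^+ k * (p%:R * x y - q%:R * x (opt_succ y)).
  by rewrite iterS -/y !exprS; ring.
by rewrite rpredD ?rpredM ?rpredX ?natr_int ?opt_succ_int.
Qed.

Lemma lasso_int m l v : (0 < l)%N -> (q <= p)%N ->
  iter (l + m) opt_succ v = iter m opt_succ v ->
  x v * (p ^ m * (p ^ l - q ^ l))%:R \is a Num.int.
Proof.
move=> l_gt0 q_le_p lasso; set y := iter m opt_succ v.
have cycle_int := iter_opt_succ_int l y.
rewrite /y -iterD lasso -/y in cycle_int.
have -> : x v * (p ^ m * (p ^ l - q ^ l))%:R =
    (p ^ l - q ^ l)%:R * (p%:R ^+ m * x v - q%:R ^+ m * x y)
    + q%:R ^+ m * (p%:R ^+ l * x y - q%:R ^+ l * x y).
  by rewrite natrM natrB ?leq_exp2r // !natrX; ring.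
by rewrite rpredD ?rpredM ?rpredX ?natr_int ?iter_opt_succ_int.
Qed.

End OptimalStrategy.

Lemma iter_card_lasso (T : finType) (f : T -> T) (x : T) :
  exists2 m, (m < #|T|)%N & iter #|T| f x = iter m f x.
Proof.
have : looping f x #|T|.
  rewrite -[looping _ _ _]negbK -looping_uniq; apply/negP => /card_uniqP.
  rewrite size_traject => card_traject.
  by have := max_card (mem (traject f x #|T|.+1)); rewrite card_traject ltnn.
by case/trajectP => m m_lt ->; exists m.
Qed.

Lemma lasso_denominator_bound (p q m n : nat) :
  (0 < q)%N -> (q < p)%N -> (m < n)%N ->
  (0 < p ^ m * (p ^ (n - m) - q ^ (n - m)) <= (p ^ n - q ^ n) * p ^ n)%N.
Proof.
move=> q_gt0 q_lt_p m_lt_n.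
have p_gt0 : (0 < p)%N by apply: ltn_trans q_lt_p.
have expB_homo : {homo (fun k => p ^ k - q ^ k)%N : a b / (a <= b)%N}.
  apply: homo_leq => [//|a b c ab bc|k]; first exact: leq_trans ab bc.
  have : (q ^ k <= p ^ k)%N by case: k => // k; rewrite leq_exp2r // ltnW.
  rewrite !expnS; nia.
rewrite muln_gt0 expn_gt0 p_gt0 subn_gt0 ltn_exp2r ?subn_gt0 // q_lt_p mulnC.
by rewrite leq_mul ?expB_homo ?leq_pexp2l ?leq_subr // ltnW.
Qed.

Theorem corollary1 (R : realType) (V : finType) (owner0 : pred V) (vinit : V)
  (E : rel V) (gamma : V -> V -> int) (p q : nat)
  (hE : forall v : V, exists w : V, E v w)
  (hp : (0 < p)%N) (hq : (0 < q)%N) (hd : (q < p)%N) :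
  exists (a : int) (b : nat),
    (0 < b <= (p ^ #|V| - q ^ #|V|) * p ^ #|V|)%N /\
    (fun k : nat => wt owner0 E gamma (p%:R / q%:R : R) k vinit)
      @ \oo --> (a%:~R / b%:R : R).
Proof.
have dV_ge0 : 0 <= (p%:R / q%:R : R)^-1 by rewrite invf_div divr_ge0.
have dV_lt1 : (p%:R / q%:R : R)^-1 < 1.
  by rewrite invf_div ltr_pdivrMr ?ltr0n // mul1r ltr_nat.
have [x x_fix wt_cvg] := wt_cvg_fixpoint owner0 gamma hE dV_ge0 dV_lt1.
have [m m_lt lasso] := iter_card_lasso (opt_succ gamma p q x) vinit.
have l_gt0 : (0 < #|V| - m)%N by rewrite subn_gt0.
rewrite -(subnK (ltnW m_lt)) in lasso.
have /intrP[a x_num] := lasso_int hE hp x_fix l_gt0 (ltnW hd) lasso.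
have /andP[b_gt0 b_le] := lasso_denominator_bound hq hd m_lt.
exists a, (p ^ m * (p ^ (#|V| - m) - q ^ (#|V| - m)))%N.
split; first by rewrite b_gt0.
by rewrite -x_num mulfK ?pnatr_eq0 -?lt0n //; exact: wt_cvg.
Qed.
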